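(* Let $k,n$ be integers with $n>2$ and $k\geq 4$, and let $c$ be an exact $k$-coloring of $\mathcal{B}_n$ with $c(\emptyset)=c([n])$ such that $\mathcal{B}_n$ contains no rainbow induced copy of $\mathcal{B}_2$. Then every rainbow chain in $\mathcal{B}_n$ has at most $4$ sets.
   Context: $\mathcal{B}_n$ is the Boolean lattice of subsets of $[n]$ under inclusion. An exact $k$-coloring is a surjective map $c:\mathcal{B}_n\to[k]$. A rainbow chain is a chain of sets whose colors are pairwise distinct. A rainbow induced copy of $\mathcal{B}_2$ is four sets $W_1\subsetneq W_2,W_3\subsetneq W_4$ with $W_2,W_3$ incomparable and pairwise distinct colors. *)

From mathcomp Require Import all_boot.
Set Implicit Arguments. Unset Strict Implicit. Unset Printing Implicit Defensive.

Definition exact_coloring (n k : nat) (c : {set 'I_n} -> 'I_k) : Prop :=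
  forall i : 'I_k, exists A : {set 'I_n}, c A = i.

Definition is_chain (n : nat) (F : {set {set 'I_n}}) : Prop :=
  forall A B, A \in F -> B \in F -> (A \subset B) || (B \subset A).

Definition rainbow (n k : nat) (c : {set 'I_n} -> 'I_k) (F : {set {set 'I_n}}) : Prop :=
  {in F &, injective c}.

Definition rainbow_induced_B2 (n k : nat) (c : {set 'I_n} -> 'I_k)
  (W1 W2 W3 W4 : {set 'I_n}) : Prop :=
  W1 \proper W2 /\ W1 \proper W3 /\ W2 \proper W4 /\ W3 \proper W4 /\
  ~~ (W2 \subset W3) /\ ~~ (W3 \subset W2) /\
  uniq [:: c W1; c W2; c W3; c W4].

From mathcomp Require Import all_boot.

Set Implicit Arguments. Unset Strict Implicit. Unset Printing Implicit Defensive.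

(* Let A1 ⊊ A2 ⊊ A3 ⊊ A4 ⊊ A5 be a rainbow chain and pick z ∈ A2 \ A1,
   x ∈ A3 \ A2, y ∈ A4 \ A3.  The sets R = A1 ∪ {x} and S = A2 ∪ {y} span
   induced copies of B_2 together with members of the chain; since none of
   them is rainbow, c S = c A3, then c R = c A1, and finally
   c ∅ ∈ {c A1, c A2}.  Complementation preserves induced copies of B_2 and
   reverses the chain, so likewise c [n] ∈ {c A4, c A5}, which contradicts
   c ∅ = c [n]. *)

Definition rainbow_B2_free n k (c : {set 'I_n} -> 'I_k) : Prop :=
  forall W1 W2 W3 W4 : {set 'I_n}, ~ rainbow_induced_B2 c W1 W2 W3 W4.

Lemma not_uniq4 (T : eqType) (a b d e : T) : ~~ uniq [:: a; b; d; e] ->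
  a = b \/ a = d \/ a = e \/ b = d \/ b = e \/ d = e.
Proof.
rewrite /= !inE.
by do ![case: eqP; first by move=> ->; tauto; move=> _].
Qed.

Lemma rainbow_B2_free_compl n k (c : {set 'I_n} -> 'I_k) :
  rainbow_B2_free c -> rainbow_B2_free (fun X => c (~: X)).
Proof.
move=> c_B2 W1 W2 W3 W4 [p12 [p13 [p24 [p34 [n23 [n32 U]]]]]].
apply: (c_B2 (~: W4) (~: W3) (~: W2) (~: W1)).
rewrite /rainbow_induced_B2 !properC !setCS -rev_uniq.
by do 6 (split; first by []).
Qed.

Section FiveChain.

Variables (n k : nat) (c : {set 'I_n} -> 'I_k).
Hypothesis c_B2 : rainbow_B2_free c.

Lemma B2_free_square (W1 W2 W3 W4 : {set 'I_n}) :
  W1 \subset W2 -> W1 \subset W3 -> W2 \subset W4 -> W3 \subset W4 ->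
  ~~ (W2 \subset W3) -> ~~ (W3 \subset W2) ->
  ~~ uniq [:: c W1; c W2; c W3; c W4].
Proof.
move=> s12 s13 s24 s34 n23 n32; apply/negP => U.
apply: (@c_B2 W1 W2 W3 W4).
rewrite /rainbow_induced_B2 !properE s12 s13 s24 s34.
rewrite (contra (fun h => subset_trans h s13) n23).
rewrite (contra (fun h => subset_trans h s12) n32).
by rewrite (contra (subset_trans s34) n32) (contra (subset_trans s24) n23).
Qed.

Lemma colour_set0_chain5 (A1 A2 A3 A4 A5 : {set 'I_n}) :
  A1 \proper A2 -> A2 \proper A3 -> A3 \proper A4 -> A4 \proper A5 ->
  uniq [:: c A1; c A2; c A3; c A4; c A5] -> c set0 = c A1 \/ c set0 = c A2.
Proof.
move=> /properP[s12 [z z2 z1]] /properP[s23 [x x3 x2]].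
move=> /properP[s34 [y y4 y3]] /properP[s45 _].
rewrite /= !inE !negb_or => /and5P[/and4P[/eqP d12 /eqP d13 /eqP d14 /eqP d15]
  /and3P[/eqP d23 /eqP d24 /eqP d25] /andP[/eqP d34 /eqP d35] /eqP d45 _].
set R := x |: A1; set S := y |: A2.
have s13 := subset_trans s12 s23; have s24 := subset_trans s23 s34.
have s35 := subset_trans s34 s45; have s25 := subset_trans s24 s45.
have s1R : A1 \subset R := subsetUr _ _.
have s2S : A2 \subset S := subsetUr _ _.
have sR3 : R \subset A3 by rewrite subUset sub1set x3.
have sS4 : S \subset A4 by rewrite subUset sub1set y4 s24.
have xNS : x \notin S.
  by rewrite !inE (negbTE x2) orbF; apply: contraNneq y3 => <-.
have zNR : z \notin R.
  by rewrite !inE (negbTE z1) orbF; apply: contraNneq x2 => <-.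
have A3_S : ~~ (A3 \subset S) by apply/subsetPn; exists x.
have S_A3 : ~~ (S \subset A3) by apply/subsetPn; exists y; rewrite ?setU11.
have A2_R : ~~ (A2 \subset R) by apply/subsetPn; exists z.
have R_A2 : ~~ (R \subset A2) by apply/subsetPn; exists x; rewrite ?setU11.
have R_S : ~~ (R \subset S) by apply/subsetPn; exists x; rewrite ?setU11.
have S_R : ~~ (S \subset R).
  by apply/subsetPn; exists z; rewrite // (subsetP s2S).
have s1S := subset_trans s12 s2S; have sS5 := subset_trans sS4 s45.
have sR4 := subset_trans sR3 s34; have sR5 := subset_trans sR4 s45.
have cS : c S = c A3.
  move: (not_uniq4 (B2_free_square s23 s2S s34 sS4 A3_S S_A3)).
  move: (not_uniq4 (B2_free_square s13 s1S s35 sS5 A3_S S_A3)).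
  by intuition congruence.
have cR : c R = c A1.
  move: (not_uniq4 (B2_free_square s12 s1R s23 sR3 A2_R R_A2)).
  move: (not_uniq4 (B2_free_square s12 s1R s24 sR4 A2_R R_A2)).
  move: (not_uniq4 (B2_free_square s1R s1S sR4 sS4 R_S S_R)).
  by rewrite cS; intuition congruence.
move: (not_uniq4 (B2_free_square (sub0set R) (sub0set A2) sR4 s24 R_A2 A2_R)).
move: (not_uniq4 (B2_free_square (sub0set R) (sub0set A2) sR5 s25 R_A2 A2_R)).
by rewrite cR; intuition congruence.
Qed.

End FiveChain.

Lemma colour_setT_chain5 n k (c : {set 'I_n} -> 'I_k)
    (A1 A2 A3 A4 A5 : {set 'I_n}) :
  rainbow_B2_free c ->
  A1 \proper A2 -> A2 \proper A3 -> A3 \proper A4 -> A4 \proper A5 ->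
  uniq [:: c A1; c A2; c A3; c A4; c A5] -> c setT = c A5 \/ c setT = c A4.
Proof.
move=> /rainbow_B2_free_compl/colour_set0_chain5.
move=> /(_ (~: A5) (~: A4) (~: A3) (~: A2) (~: A1)).
rewrite !properC !setCK setC0 -rev_uniq => colour_setT p12 p23 p34 p45 U.
exact: colour_setT.
Qed.

Lemma sort_chain_sorted_proper n (F : {set {set 'I_n}}) : is_chain F ->
  sorted (fun A B : {set 'I_n} => A \proper B)
         (sort (fun A B : {set 'I_n} => A \subset B) (enum F)).
Proof.
move=> chF; set s := sort _ _.
have s_sub : sorted (fun A B : {set 'I_n} => A \subset B) s.
  apply: (sort_sorted_in (P := mem F)); first by move=> A B; apply: chF.
  by apply/allP => A; rewrite mem_enum.
have s_uniq : uniq s by rewrite sort_uniq enum_uniq.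
have s_sub_neq : pairwise [rel A B : {set 'I_n} | (A != B) && (A \subset B)] s.
  rewrite pairwise_relI -uniq_pairwise s_uniq -sorted_pairwise //.
  by move=> B A C; apply: subset_trans.
apply/pairwise_sorted/(sub_pairwise _ s_sub_neq) => A B /=.
by rewrite properEneq.
Qed.

Lemma rainbow_proper_chain_size n k (c : {set 'I_n} -> 'I_k)
    (s : seq {set 'I_n}) :
  rainbow_B2_free c -> c set0 = c setT ->
  sorted (fun A B : {set 'I_n} => A \proper B) s -> uniq (map c s) ->
  size s <= 4.
Proof.
move=> c_B2 c0T; case: s => [|A1 [|A2 [|A3 [|A4 [|A5 t]]]]] //=.
move=> /and5P[p12 p23 p34 p45 _].
have /subseq_uniq U := prefix_subseq [:: c A1; c A2; c A3; c A4; c A5] (map c t).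
move=> /U {}U.
have := colour_set0_chain5 c_B2 p12 p23 p34 p45 U.
have := colour_setT_chain5 c_B2 p12 p23 p34 p45 U.
move: U; rewrite /= !inE !negb_or c0T.
case/and5P=> /and4P[_ _ /eqP ? /eqP ?] /and3P[_ /eqP ? /eqP ?] _ _ _.
by case=> ? [] ?; congruence.
Qed.

Theorem lemma2p11 (n k : nat) (c : {set 'I_n} -> 'I_k) :
  2 < n -> 4 <= k ->
  exact_coloring c ->
  c set0 = c setT ->
  (forall W1 W2 W3 W4 : {set 'I_n}, ~ rainbow_induced_B2 c W1 W2 W3 W4) ->
  forall F : {set {set 'I_n}}, is_chain F -> rainbow c F -> #|F| <= 4.
Proof.
move=> _ _ _ c0T c_B2 F chF rbF.
rewrite cardE -(size_sort (fun A B : {set 'I_n} => A \subset B)).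
apply: (rainbow_proper_chain_size c_B2 c0T (sort_chain_sorted_proper chF)).
rewrite map_inj_in_uniq ?sort_uniq ?enum_uniq // => A B.
by rewrite !mem_sort !mem_enum; apply: rbF.
Qed.
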